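(* Let $X$ and $\Lambda$ be nonempty sets, $f: X\to\mathbb{R}$ a function and $(f_\lambda)_{\lambda\in\Lambda}$ a family of real-valued functions on $X$ such that the family $(f_\lambda-f)_{\lambda\in\Lambda}$ is infsup-convex on $X$. Assume that $(f_\lambda(x))_{\lambda\in\Lambda}\in\ell^\infty(\Lambda)$ for every $x\in X$, and that $f(x)\le\sup_{\lambda\in\Lambda}f_\lambda(x)$ for every $x\in X$. Then there exists $\Phi\in\Delta_\Lambda$ such that $f(x)\le\Phi((f_\lambda(x))_{\lambda\in\Lambda})$ for every $x\in X$.
   Context: For a nonempty set $\Lambda$, $\ell^\infty(\Lambda)$ is the real Banach space of bounded real-valued functions on $\Lambda$ (sup-norm), $\ell^\infty(\Lambda)^*$ its topological dual, and $\Delta_\Lambda:=\{\Phi\in\ell^\infty(\Lambda)^*:\ \Phi(\varphi)\le\sup_{\lambda\in\Lambda}\varphi(\lambda)\ \forall\varphi\in\ell^\infty(\Lambda)\}$. Let $\Delta_m:=\{(t_1,\dots,t_m)\in\mathbb{R}^m: t_j\ge0,\ \sum_j t_j=1\}$. A family $(g_\lambda)_{\lambda\in\Lambda}$ of real-valued functions on a nonempty set $X$ is infsup-convex on $X$ if for all $m\ge1$, $\mathbf{t}\in\Delta_m$ and $x_1,\dots,x_m\in X$: $\inf_{x\in X}\sup_{\lambda\in\Lambda}g_\lambda(x)\le\sup_{\lambda\in\Lambda}\sum_{j=1}^m t_j g_\lambda(x_j)$. *)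

From HB Require Import structures.
From mathcomp Require Import all_boot all_order all_algebra.
From mathcomp Require Import all_classical all_reals.
From mathcomp Require Import ereal.
Set Implicit Arguments. Unset Strict Implicit. Unset Printing Implicit Defensive.
Import Order.TTheory GRing.Theory Num.Theory.
Local Open Scope classical_set_scope.
Local Open Scope ring_scope.

Definition linf_mem (R : realType) (Lam : Type) (phi : Lam -> R) : Prop :=
  exists M : R, forall l, `|phi l| <= M.

Definition linf_norm (R : realType) (Lam : Type) (phi : Lam -> R) : R :=
  sup (range (fun l => `|phi l|)).

(* Phi (only its values on l^oo(Lam) matter) is an element of the
   topological dual l^oo(Lam)^*: linear and bounded w.r.t. the sup-norm *)
Definition linf_dual (R : realType) (Lam : Type) (Phi : (Lam -> R) -> R) : Prop :=
  (forall phi psi, linf_mem phi -> linf_mem psi ->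
     Phi (fun l => phi l + psi l) = Phi phi + Phi psi) /\
  (forall (a : R) phi, linf_mem phi -> Phi (fun l => a * phi l) = a * Phi phi) /\
  (exists C : R, forall phi, linf_mem phi -> `|Phi phi| <= C * linf_norm phi).

Definition Delta_Lam (R : realType) (Lam : Type) (Phi : (Lam -> R) -> R) : Prop :=
  linf_dual Phi /\ forall phi, linf_mem phi -> Phi phi <= sup (range phi).

Definition infsup_convex (R : realType) (X Lam : Type) (g : Lam -> X -> R) : Prop :=
  forall (m : nat) (t : 'I_m -> R) (xs : 'I_m -> X),
    (0 < m)%N -> (forall j, 0 <= t j) -> \sum_(j < m) t j = 1 ->
    (ereal_inf (range (fun x => ereal_sup (range (fun l => (g l x)%:E)))) <=
     ereal_sup (range (fun l => (\sum_(j < m) t j * g l (xs j))%:E)))%E.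

From HB Require Import structures.
From mathcomp Require Import all_boot all_order all_algebra.
From mathcomp Require Import all_classical all_reals.
From mathcomp Require Import ereal.
From mathcomp Require Import lra.
Set Implicit Arguments. Unset Strict Implicit. Unset Printing Implicit Defensive.
Import Order.TTheory GRing.Theory Num.Theory.
Local Open Scope classical_set_scope.
Local Open Scope ring_scope.

(* The functional comes from a Hahn-Banach theorem relative to a convex cone:
   if p is sublinear on a subspace B and nonnegative on a convex cone K in B,
   some linear Phi on B satisfies Phi u <= p (u + k) for all u in B and k in K
   (Zorn's lemma on dominated partial graphs plus the one-dimensional
   extension step).  Take B = l^oo(Lam), p = sup and K the cone generated by
   the functions g_x = (f_l(x) - f(x))_l: infsup-convexity together with
   f <= sup_l f_l is exactly what makes p nonnegative on K.  Then Phi <= sup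
   puts Phi in Delta_Lam and forces Phi 1 = 1, while
   Phi (- g_x) <= sup (- g_x + g_x) = 0 gives Phi g_x >= 0, that is
   f(x) <= Phi ((f_l(x))_l). *)

Lemma exists_between (R : realType) (S T : set R) :
  S !=set0 -> T !=set0 -> (forall s t, S s -> T t -> s <= t) ->
  exists c, ubound S c /\ lbound T c.
Proof.
move=> S0 [t0 Tt0] leST; exists (sup S); split.
- by apply: ub_le_sup; exists t0 => s Ss; exact: leST.
- by move=> t Tt; apply: ge_sup => // s Ss; exact: leST.
Qed.

Lemma scalerV_comb (R : fieldType) (V : lmodType R) (a : R) (s w k : V) :
  a != 0 -> a *: (a^-1 *: s + w + a^-1 *: k) = s + a *: w + k.
Proof. by move=> a0; rewrite !scalerDr !scalerA mulfV // !scale1r. Qed.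

Section hahn_banach_cone.
Variables (R : realType) (V : lmodType R) (B K : set V) (p : V -> R).
Hypotheses (B0 : B 0) (BD : forall u v, B u -> B v -> B (u + v))
  (BZ : forall a u, B u -> B (a *: u)).
Hypotheses (KB : K `<=` B) (K0 : K 0)
  (KD : forall k k', K k -> K k' -> K (k + k'))
  (KZ : forall a k, 0 <= a -> K k -> K (a *: k)).
Hypotheses (pD : forall u v, B u -> B v -> p (u + v) <= p u + p v)
  (pZ : forall a u, 0 < a -> B u -> p (a *: u) = a * p u)
  (p_ge0 : forall k, K k -> 0 <= p k).

Record dominated_graph (G : set (V * R)) : Prop := {
  dg_dom : forall u r, G (u, r) -> B u;
  dg_fun : forall u r r', G (u, r) -> G (u, r') -> r = r';
  dg_add : forall u r v s, G (u, r) -> G (v, s) -> G (u + v, r + s);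
  dg_scale : forall a u r, G (u, r) -> G (a *: u, a * r);
  dg_le : forall u r k, G (u, r) -> K k -> r <= p (u + k) }.

Lemma dominated_graph_bigcup (F : set (set (V * R))) :
  F `<=` dominated_graph -> total_on F subset ->
  dominated_graph (\bigcup_(G in F) G).
Proof.
move=> Fdom Ftot; split.
- by move=> u r [G FG Gur]; exact: (dg_dom (Fdom G FG) Gur).
- move=> u r r' [G FG Gur] [H FH Hur'].
  have [GH|HG] := Ftot G H FG FH.
  + exact: (dg_fun (Fdom H FH) (GH _ Gur) Hur').
  + exact: (dg_fun (Fdom G FG) Gur (HG _ Hur')).
- move=> u r v s [G FG Gur] [H FH Hvs].
  have [GH|HG] := Ftot G H FG FH.
  + by exists H => //; exact: (dg_add (Fdom H FH) (GH _ Gur) Hvs).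
  + by exists G => //; exact: (dg_add (Fdom G FG) Gur (HG _ Hvs)).
- by move=> a u r [G FG Gur]; exists G => //; exact: (dg_scale (Fdom G FG) a Gur).
- by move=> u r k [G FG Gur]; exact: (dg_le (Fdom G FG) Gur).
Qed.

Lemma dominated_graph0 : dominated_graph [set (0, 0)].
Proof.
split.
- by move=> u r [-> _].
- by move=> u r r' [_ ->] [_ ->].
- by move=> u r v s [-> ->] [-> ->]; rewrite !addr0.
- by move=> a u r [-> ->]; rewrite scaler0 mulr0.
- by move=> u r k [-> ->] Kk; rewrite add0r; exact: p_ge0.
Qed.

Lemma dominated_graph_has0 G : dominated_graph G -> G !=set0 -> G (0, 0).
Proof.
by move=> Gdom [[u r] Gur]; have := dg_scale Gdom 0 Gur; rewrite scale0r mul0r.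
Qed.

Lemma dg_sub G u r v s : dominated_graph G -> G (u, r) -> G (v, s) ->
  G (u - v, r - s).
Proof.
move=> Gdom Gur Gvs.
by have := dg_add Gdom Gur (dg_scale Gdom (-1) Gvs); rewrite scaleN1r mulN1r.
Qed.

Section extension.
Variables (G : set (V * R)) (y : V).
Hypotheses (Gdom : dominated_graph G) (By : B y).

Lemma extension_gap u r t s k k' : G (u, r) -> G (t, s) -> K k -> K k' ->
  r - p (u - y + k) <= p (t + y + k') - s.
Proof.
move=> Gur Gts Kk Kk'.
have Bu := dg_dom Gdom Gur; have Bt := dg_dom Gdom Gts.
have := dg_le Gdom (dg_add Gdom Gur Gts) (KD Kk Kk').
have Bny : B (- y) by rewrite -scaleN1r; exact: BZ.
have := pD (BD (BD Bu Bny) (KB Kk)) (BD (BD Bt By) (KB Kk')).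
have -> : u - y + k + (t + y + k') = u + t + (k + k').
  by rewrite addrACA [t + y]addrC subrKA.
lra.
Qed.

Definition graph_extension (c : R) : set (V * R) :=
  [set z | exists s r a, G (s, r) /\ z = (s + a *: y, r + a * c)].

(* Extending by (y, c) keeps the graph dominated exactly when c lies between
   these two families of bounds, which [extension_gap] shows to be compatible. *)
Variable c : R.
Hypotheses (c_lb : forall u r k, G (u, r) -> K k -> r - p (u - y + k) <= c)
  (c_ub : forall u r k, G (u, r) -> K k -> c <= p (u + y + k) - r).

Lemma graph_extension_le s r a k : G (s, r) -> K k ->
  r + a * c <= p (s + a *: y + k).
Proof.
move=> Gsr Kk; have Bs := dg_dom Gdom Gsr.
have Bcomb b w : B w -> B (b *: s + w + b *: k).
  by move=> Bw; apply: BD; [apply: BD => //; exact: BZ | exact/BZ/KB].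
have [a_lt0|a_gt0|->] := ltgtP a 0; last first.
- by rewrite mul0r addr0 scale0r addr0; exact: (dg_le Gdom Gsr Kk).
- have ai_ge0 : 0 <= a^-1 by rewrite invr_ge0 ltW.
  have := ler_wpM2l (ltW a_gt0) (c_ub (dg_scale Gdom a^-1 Gsr) (KZ ai_ge0 Kk)).
  rewrite -(scalerV_comb _ _ _ (lt0r_neq0 a_gt0)) pZ //; last exact: Bcomb.
  by rewrite mulrBr mulrA mulfV ?lt0r_neq0 // mul1r; lra.
- have b_gt0 : 0 < - a by rewrite oppr_gt0.
  have bi_ge0 : 0 <= (- a)^-1 by rewrite invr_ge0 ltW.
  have := ler_wpM2l (ltW b_gt0) (c_lb (dg_scale Gdom (- a)^-1 Gsr) (KZ bi_ge0 Kk)).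
  have -> : s + a *: y + k = - a *: ((- a)^-1 *: s - y + (- a)^-1 *: k).
    by rewrite scalerV_comb ?lt0r_neq0 // scaleNr scalerN opprK.
  rewrite pZ //; last by apply: Bcomb; rewrite -scaleN1r; exact: BZ.
  by rewrite mulrBr mulrA mulfV ?lt0r_neq0 // mul1r; lra.
Qed.

Hypothesis y_new : forall r, ~ G (y, r).

Lemma dominated_graph_extension : dominated_graph (graph_extension c).
Proof.
split.
- move=> _ _ [s [r [a [Gsr [-> _]]]]].
  by apply: BD; [exact: (dg_dom Gdom Gsr) | exact: BZ].
- move=> _ r1 r2 [s1 [q1 [a1 [Gs1 [-> ->]]]]] [s2 [q2 [a2 [Gs2 [E ->]]]]].
  have [a12|a12] := eqVneq a1 a2.
    subst a2; have s12 : s1 = s2 by rewrite -[s1](addrK (a1 *: y)) E addrK.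
    by subst s2; rewrite (dg_fun Gdom Gs1 Gs2).
  have a12_neq0 : a1 - a2 != 0 by rewrite subr_eq0.
  have y_eq : y = (a1 - a2)^-1 *: (s2 - s1).
    have -> : s2 - s1 = (a1 - a2) *: y.
      by rewrite scalerBl -[s2](addrK (a2 *: y)) -E addrAC [_ - s1]addrC addKr.
    by rewrite scalerA mulVf // scale1r.
  have := dg_scale Gdom (a1 - a2)^-1 (dg_sub Gdom Gs2 Gs1).
  by rewrite -y_eq => /y_new.
- move=> _ _ _ _ [s1 [q1 [a1 [Gs1 [-> ->]]]]] [s2 [q2 [a2 [Gs2 [-> ->]]]]].
  exists (s1 + s2), (q1 + q2), (a1 + a2); split; first exact: (dg_add Gdom Gs1 Gs2).
  by rewrite scalerDl mulrDl; congr (_, _); exact: addrACA.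
- move=> b _ _ [s [q [a [Gsq [-> ->]]]]].
  exists (b *: s), (b * q), (b * a); split; first exact: (dg_scale Gdom b Gsq).
  by rewrite scalerDr scalerA mulrDr mulrA.
- by move=> _ _ k [s [q [a [Gsq [-> ->]]]]] Kk; exact: graph_extension_le.
Qed.

Lemma graph_extension_proper : G (0, 0) -> G `<` graph_extension c.
Proof.
move=> G00; split.
  by move=> [u r] Gur; exists u, r, 0; rewrite scale0r mul0r !addr0.
move/(_ (y, c)) => Gyc; apply: (@y_new c); apply: Gyc.
by exists 0, 0, 1; rewrite scale1r mul1r !add0r.
Qed.

End extension.

Theorem hahn_banach_cone : exists Phi : V -> R,
  [/\ forall u v, B u -> B v -> Phi (u + v) = Phi u + Phi v,
      forall a u, B u -> Phi (a *: u) = a * Phi u &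
      forall u k, B u -> K k -> Phi u <= p (u + k)].
Proof.
have [A [Adom Amax]] := Zorn_bigcup dominated_graph_bigcup.
have A00 : A (0, 0).
  apply: dominated_graph_has0 => //; apply/set0P/eqP => A0.
  apply: (Amax _ _ dominated_graph0); rewrite A0; split=> // /(_ (0, 0)).
  by apply.
have A_total u : B u -> exists r, A (u, r).
  move=> Bu; apply: contrapT => /forallNP u_new.
  pose lo := [set d | exists t r k, [/\ A (t, r), K k & d = r - p (t - u + k)]].
  pose hi := [set d | exists t r k, [/\ A (t, r), K k & d = p (t + u + k) - r]].
  have [c [c_lb c_ub]] : exists c, ubound lo c /\ lbound hi c.
    apply: exists_between; [by exists (0 - p (0 - u + 0)), 0, 0, 0
                           |by exists (p (0 + u + 0) - 0), 0, 0, 0|].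
    move=> _ _ [t [r [k [Atr Kk ->]]]] [t' [r' [k' [Atr' Kk' ->]]]].
    exact: (extension_gap Adom Bu).
  apply: (Amax _ (graph_extension_proper c u_new A00)).
  apply: dominated_graph_extension => // t r k Atr Kk.
  - by apply: c_lb; exists t, r, k.
  - by apply: c_ub; exists t, r, k.
pose Phi u := xget 0 [set r | A (u, r)].
have PhiA u : B u -> A (u, Phi u) by move=> Bu; exact: xgetPex (A_total u Bu).
exists Phi; split.
- move=> u v Bu Bv.
  exact: (dg_fun Adom (PhiA _ (BD Bu Bv)) (dg_add Adom (PhiA _ Bu) (PhiA _ Bv))).
- move=> a u Bu.
  exact: (dg_fun Adom (PhiA _ (BZ a Bu)) (dg_scale Adom a (PhiA _ Bu))).
- by move=> u k Bu Kk; exact: (dg_le Adom (PhiA _ Bu) Kk).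
Qed.

End hahn_banach_cone.

Section bounded_functions.
Variables (R : realType) (Lam : Type).
Local Notation V := (Lam -> R^o).
Implicit Types (phi psi : V) (a c : R).

Lemma linf_mem_cst c : linf_mem (fun _ : Lam => c).
Proof. by exists `|c|. Qed.

Lemma linf_memD phi psi : linf_mem phi -> linf_mem psi -> linf_mem (phi + psi).
Proof.
move=> [M phiM] [N psiN]; exists (M + N) => l.
exact: le_trans (ler_normD _ _) (lerD (phiM l) (psiN l)).
Qed.

Lemma linf_memZ a phi : linf_mem phi -> linf_mem (a *: phi).
Proof.
by move=> [M phiM]; exists (`|a| * M) => l; rewrite normrM ler_wpM2l.
Qed.

Lemma linf_memN phi : linf_mem phi -> linf_mem (- phi).
Proof. by rewrite -scaleN1r; exact: linf_memZ. Qed.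

Lemma linf_mem_ubound phi : linf_mem phi -> has_ubound (range phi).
Proof.
by move=> [M phiM]; exists M => _ [l _ <-]; exact: le_trans (ler_norm _) (phiM l).
Qed.

Lemma le_sup_linf phi l : linf_mem phi -> phi l <= sup (range phi).
Proof. by move=> /linf_mem_ubound phi_ub; apply: ub_le_sup => //; exists l. Qed.

Hypothesis Lam0 : inhabited Lam.

Lemma sup_range_le phi M : (forall l, phi l <= M) -> sup (range phi) <= M.
Proof.
by case: Lam0 => l0 phiM; apply: ge_sup => [|_ [l _ <-]]; [exists (phi l0), l0|].
Qed.

Lemma sup_le_linf_norm phi psi : linf_mem phi -> (forall l, psi l <= `|phi l|) ->
  sup (range psi) <= linf_norm phi.
Proof.
move=> [M phiM] psi_le; apply: sup_range_le => l; apply: le_trans (psi_le l) _.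
rewrite /linf_norm; apply: (@le_sup_linf (fun l => `|phi l|)).
by exists M => l'; rewrite normr_id.
Qed.

Lemma sup_range_cst c : sup (range (fun _ : Lam => c)) = c.
Proof.
apply/eqP; rewrite eq_le sup_range_le //=.
by case: Lam0 => l0; exact: (@le_sup_linf (fun _ => c) l0 (linf_mem_cst c)).
Qed.

Lemma sup_linfD phi psi : linf_mem phi -> linf_mem psi ->
  sup (range (phi + psi)) <= sup (range phi) + sup (range psi).
Proof.
by move=> phi_bdd psi_bdd; apply: sup_range_le => l; apply: lerD; exact: le_sup_linf.
Qed.

Lemma sup_linfZ a phi : 0 < a -> linf_mem phi ->
  sup (range (a *: phi)) = a * sup (range phi).
Proof.
move=> a_gt0 phi_bdd; apply/eqP; rewrite eq_le; apply/andP; split.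
  by apply: sup_range_le => l; rewrite ler_pM2l //; exact: le_sup_linf.
rewrite -ler_pdivlMl //; apply: sup_range_le => l.
by rewrite ler_pdivlMl //; exact: (le_sup_linf l (linf_memZ a phi_bdd)).
Qed.

Lemma ereal_sup_linf phi : linf_mem phi ->
  ereal_sup (range (fun l => (phi l)%:E)) = (sup (range phi))%:E.
Proof.
case: Lam0 => l0 phi_bdd; rewrite -(image_comp phi EFin) ereal_sup_EFin //.
  exact: linf_mem_ubound.
by exists (phi l0), l0.
Qed.

Lemma linf_mem_sum (I : Type) (r : seq I) (F : I -> V) :
  (forall i, linf_mem (F i)) -> linf_mem (\sum_(i <- r) F i).
Proof.
move=> F_bdd; apply: (big_ind (fun phi : V => linf_mem phi)) => //.
- exact: (linf_mem_cst 0).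
- exact: linf_memD.
Qed.

End bounded_functions.

Section conic_hull.
Variables (R : numDomainType) (V : lmodType R) (X : Type) (G : X -> V).

Definition conic_hull : set V := [set v | exists s : seq (R * X),
  all (fun q => 0 <= q.1) s /\ v = \sum_(q <- s) q.1 *: G q.2].

Lemma conic_hull0 : conic_hull 0.
Proof. by exists [::]; rewrite big_nil. Qed.

Lemma conic_hull_gen x : conic_hull (G x).
Proof. by exists [:: (1, x)]; rewrite /= ler01 big_seq1 scale1r. Qed.

Lemma conic_hullD u v : conic_hull u -> conic_hull v -> conic_hull (u + v).
Proof.
move=> [s [s_ge0 ->]] [s' [s'_ge0 ->]]; exists (s ++ s').
by rewrite all_cat s_ge0 s'_ge0 big_cat.
Qed.

Lemma conic_hullZ a v : 0 <= a -> conic_hull v -> conic_hull (a *: v).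
Proof.
move=> a_ge0 [s [s_ge0 ->]]; exists [seq (a * q.1, q.2) | q <- s]; split.
  by rewrite all_map; apply: sub_all s_ge0 => q /= q_ge0; exact: mulr_ge0.
by rewrite big_map scaler_sumr; apply: eq_bigr => q _; rewrite scalerA.
Qed.

Lemma conic_hull_sub (B : set V) : B 0 -> (forall u v, B u -> B v -> B (u + v)) ->
  (forall a u, B u -> B (a *: u)) -> (forall x, B (G x)) -> conic_hull `<=` B.
Proof.
move=> B0 BD BZ BG _ [s [_ ->]].
by apply: (big_ind B) => // q _; exact: BZ.
Qed.

End conic_hull.

Section infsup_convex_cone.
Variables (R : realType) (X Lam : Type) (g : Lam -> X -> R).
Hypotheses (Lam0 : inhabited Lam) (g_bdd : forall x, linf_mem (fun l => g l x))
  (g_conv : infsup_convex g)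
  (g_sup_ge0 : forall x, 0 <= sup (range (fun l => g l x))).
Local Notation G := (fun x => (fun l => g l x) : Lam -> R^o).

Lemma sup_convex_comb_ge0 m (t : 'I_m -> R) (xs : 'I_m -> X) :
  (0 < m)%N -> (forall j, 0 <= t j) -> \sum_(j < m) t j = 1 ->
  0 <= sup (range (fun l => \sum_(j < m) t j * g l (xs j))).
Proof.
move=> m_gt0 t_ge0 t_sum1.
have comb_bdd : linf_mem (fun l => \sum_(j < m) t j * g l (xs j)).
  have := linf_mem_sum (index_enum 'I_m) (fun j => linf_memZ (t j) (g_bdd (xs j))).
  by rewrite fct_sumE.
have infsup_ge0 :
    (0 <= ereal_inf (range (fun x => ereal_sup (range (fun l => (g l x)%:E)))))%E.
  by apply: le_ereal_inf_tmp => _ [x _ <-]; rewrite ereal_sup_linf // lee_fin.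
have := le_trans infsup_ge0 (g_conv xs m_gt0 t_ge0 t_sum1).
by rewrite ereal_sup_linf.
Qed.

Lemma sup_nonneg_comb_ge0 m (t : 'I_m -> R) (xs : 'I_m -> X) :
  (forall j, 0 <= t j) -> 0 <= sup (range (\sum_(j < m) t j *: G (xs j))).
Proof.
move=> t_ge0; have [w0|w_neq0] := eqVneq (\sum_(j < m) t j) 0.
  rewrite big1 => [|j _]; last first.
    by rewrite (psumr_eq0P (fun j _ => t_ge0 j) w0) ?scale0r.
  by rewrite sup_range_cst.
have m_gt0 : (0 < m)%N.
  by case: m t xs t_ge0 w_neq0 => // t xs _; rewrite big_ord0 eqxx.
set w := \sum_(j < m) t j in w_neq0.
have w_gt0 : 0 < w by rewrite lt_def w_neq0 sumr_ge0.
have -> : \sum_(j < m) t j *: G (xs j) = w *: \sum_(j < m) (t j / w) *: G (xs j).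
  by rewrite scaler_sumr; apply: eq_bigr => j _; rewrite scalerA mulrCA mulfV ?mulr1.
rewrite sup_linfZ //; last by apply: linf_mem_sum => j; exact: linf_memZ.
apply: mulr_ge0; first exact: ltW.
rewrite fct_sumE; apply: sup_convex_comb_ge0 => // [j|].
- by apply: divr_ge0 => //; exact: ltW.
- by rewrite -mulr_suml mulfV.
Qed.

Lemma sup_conic_hull_ge0 k : conic_hull G k -> 0 <= sup (range k).
Proof.
move=> [s [s_ge0 ->]]; case: s s_ge0 => [|q s] s_ge0.
  by rewrite big_nil sup_range_cst.
rewrite (big_nth q) big_mkord; apply: sup_nonneg_comb_ge0 => j.
exact: (all_nthP q s_ge0 j (ltn_ord j)).
Qed.

End infsup_convex_cone.

Section sup_dominated.
Variables (R : realType) (Lam : Type) (Phi : (Lam -> R) -> R).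
Local Notation V := (Lam -> R^o).
Hypotheses (Lam0 : inhabited Lam)
  (PhiD : forall phi psi : V, linf_mem phi -> linf_mem psi ->
     Phi (phi + psi) = Phi phi + Phi psi)
  (PhiZ : forall a (phi : V), linf_mem phi -> Phi (a *: phi) = a * Phi phi)
  (Phi_le : forall phi : V, linf_mem phi -> Phi phi <= sup (range phi)).

Lemma sup_dominatedN (phi : V) : linf_mem phi -> Phi (- phi) = - Phi phi.
Proof. by move=> phi_bdd; rewrite -scaleN1r PhiZ // mulN1r. Qed.

Lemma sup_dominated_ge (phi : V) : linf_mem phi -> - sup (range (- phi)) <= Phi phi.
Proof.
by move=> phi_bdd; rewrite lerNl -sup_dominatedN //; exact/Phi_le/linf_memN.
Qed.

Lemma sup_dominated_cst c : Phi (fun _ => c) = c.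
Proof.
apply/eqP; rewrite eq_le; apply/andP; split.
  by apply: le_trans (Phi_le (linf_mem_cst Lam c)) _; rewrite sup_range_cst.
apply: le_trans _ (sup_dominated_ge (linf_mem_cst Lam c)).
by rewrite sup_range_cst ?opprK.
Qed.

Lemma Delta_Lam_sup_dominated : Delta_Lam Phi.
Proof.
split; last exact: Phi_le.
split; [exact: PhiD | split; [exact: PhiZ | exists 1 => phi phi_bdd]].
rewrite mul1r ler_norml; apply/andP; split.
- rewrite lerNl -sup_dominatedN //; apply: le_trans (Phi_le (linf_memN phi_bdd)) _.
  by apply: sup_le_linf_norm => // l; rewrite -normrN; exact: ler_norm.
- apply: le_trans (Phi_le phi_bdd) _.
  by apply: sup_le_linf_norm => // l; exact: ler_norm.
Qed.

End sup_dominated.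

Theorem theorem3p1 (R : realType) (X Lam : Type)
  (hX : inhabited X) (hLam : inhabited Lam)
  (f : X -> R) (fl : Lam -> X -> R)
  (hconv : infsup_convex (fun l x => fl l x - f x))
  (hbdd : forall x, linf_mem (fun l => fl l x))
  (hle : forall x, f x <= sup (range (fun l => fl l x))) :
  exists Phi : (Lam -> R) -> R, Delta_Lam Phi /\
    forall x, f x <= Phi (fun l => fl l x).
Proof.
pose G x : Lam -> R^o := fun l => fl l x - f x.
have G_bdd x : linf_mem (G x).
  exact: linf_memD (hbdd x) (linf_mem_cst Lam (- f x)).
have G_sup_ge0 x : 0 <= sup (range (G x)).
  suff : sup (range (fun l => fl l x)) <= sup (range (G x)) + f x.
    by have := hle x; lra.
  by apply: sup_range_le => // l; rewrite -lerBlDr; exact: (le_sup_linf l (G_bdd x)).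
have [Phi [PhiD PhiZ Phi_le]] := hahn_banach_cone (linf_mem_cst Lam 0)
  (@linf_memD R Lam) (@linf_memZ R Lam)
  (conic_hull_sub (linf_mem_cst Lam 0) (@linf_memD R Lam) (@linf_memZ R Lam) G_bdd)
  (conic_hull0 G) (@conic_hullD _ _ _ G) (@conic_hullZ _ _ _ G)
  (sup_linfD hLam) (sup_linfZ hLam) (sup_conic_hull_ge0 hLam G_bdd hconv G_sup_ge0).
have Phi_sup phi : linf_mem phi -> Phi phi <= sup (range phi).
  by move=> phi_bdd; have := Phi_le phi 0 phi_bdd (conic_hull0 G); rewrite addr0.
exists Phi; split; first exact: Delta_Lam_sup_dominated.
move=> x; have PhiG_ge0 : 0 <= Phi (G x).
  have := Phi_le _ _ (linf_memN (G_bdd x)) (conic_hull_gen G x).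
  by rewrite addNr sup_range_cst // (sup_dominatedN PhiZ) ?G_bdd // oppr_le0.
have -> : (fun l => fl l x) = G x + (fun _ => f x).
  by apply: funext => l; exact: (esym (subrK _ _)).
rewrite PhiD ?(sup_dominated_cst hLam PhiZ Phi_sup) ?lerDr //.
exact: linf_mem_cst.
Qed.
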